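(* Let $A$ be a set of $n$ items with costs $c(i)\ge 0$, each satisfying $c(i)\le B$ for a budget $B>0$, and let $v:2^A\to\mathbb{R}_{\ge0}$ be monotone subadditive with $v(\emptyset)=0$, accessible via a demand oracle. The algorithm SA-alg-max below outputs a set $S$ with $c(S)\le B$ and $v(S)\ge \frac18\max\{v(S')\,:\,S'\subseteq A,\ c(S')\le B\}$. SA-alg-max: let $v^*=\max_{i\in A}v(\{i\})$ and $\mathcal V=\{v^*,2v^*,\dots,nv^*\}$. For each $u\in\mathcal V$: set prices $p(i)=\frac{u}{2B}c(i)$, and let $T\in\arg\max_{S\subseteq A}\big(v(S)-\sum_{i\in S}p(i)\big)$ (obtained by a demand query); let $S_u=\emptyset$; if $v(T)<\frac u2$, continue to the next $u$; otherwise, going through the items of $T$ in decreasing order of $c(i)$, put items from $T$ into $S_u$ while preserving the budget constraint $c(S_u)\le B$. Output the set $S_u$ with the largest value $v(S_u)$ over all $u\in\mathcal V$.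
   Context: A demand oracle, given a price vector $p(1),\dots,p(n)$, returns a set $T\in\arg\max_{S\subseteq A}\big(v(S)-\sum_{i\in S}p(i)\big)$ in unit time. Subadditive: $v(S)+v(T)\ge v(S\cup T)$ for all $S,T$. *)

From mathcomp Require Import all_boot all_order all_algebra.
Set Implicit Arguments. Unset Strict Implicit. Unset Printing Implicit Defensive.
Import Order.TTheory GRing.Theory Num.Theory.
Local Open Scope ring_scope.

Section Defs.
Variables (R : realFieldType) (A : finType).

Definition cost (c : A -> R) (S : {set A}) : R := \sum_(i in S) c i.

Definition monotone_fun (v : {set A} -> R) : Prop :=
  forall S T : {set A}, S \subset T -> v S <= v T.

Definition subadditive (v : {set A} -> R) : Prop :=
  forall S T : {set A}, v (S :|: T) <= v S + v T.

Definition demand_oracle (v : {set A} -> R) (dem : (A -> R) -> {set A}) : Prop :=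
  forall (p : A -> R) (S : {set A}),
    v S - \sum_(i in S) p i <= v (dem p) - \sum_(i in dem p) p i.

(* v* = max_i v({i})  (v >= 0, so 0 is a harmless default for the fold) *)
Definition vstar (v : {set A} -> R) : R := \big[Num.max/0]_(i : A) v [set i].

Definition in_Vgrid (v : {set A} -> R) (u : R) : Prop :=
  exists k : nat, (k < #|A|)%N /\ u = (k.+1)%:R * vstar v.

Definition prices (B : R) (c : A -> R) (u : R) : A -> R :=
  fun i => u / (2 * B) * c i.

Fixpoint greedy (B : R) (c : A -> R) (s : seq A) (acc : R) : seq A :=
  match s with
  | [::] => [::]
  | x :: s' => if acc + c x <= B then x :: greedy B c s' (acc + c x) else [::]
  end.

Definition S_u (v : {set A} -> R) (B : R) (c : A -> R)
    (dem : (A -> R) -> {set A}) (ord : R -> seq A) (u : R) : {set A} :=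
  let T := dem (prices B c u) in
  if v T < u / 2 then set0 else [set x in greedy B c (ord u) 0].

Definition valid_order (B : R) (c : A -> R) (dem : (A -> R) -> {set A})
    (ord : R -> seq A) : Prop :=
  forall u : R, perm_eq (ord u) (enum (dem (prices B c u))) /\
                sorted (fun x y => c y <= c x) (ord u).

End Defs.

From mathcomp Require Import all_boot all_order all_algebra.
From mathcomp Require Import ring lra zify.
Import Order.TTheory GRing.Theory Num.Theory.
Local Open Scope ring_scope.

(* Every feasible set W has value at most |A| v*, so some grid value u lies in
   [v(W)/2, v(W)] once v(W) >= v*.  With prices u/(2B) c, feasibility of W and
   optimality of the demanded set T give v(T) >= u/2.  If the greedy pass takes
   all of T we are done; otherwise, because items are scanned by decreasing cost,
   it has filled at least half the budget, and optimality of T against T \ S_u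
   together with subadditivity give v(S_u) >= u/(2B) c(S_u) >= u/4 >= v(W)/8.
   A feasible set of value below v* is beaten by the best singleton. *)

Section Development.
Context {R : realFieldType} {A : finType}.
Implicit Types (v : {set A} -> R) (c p : A -> R) (S T W : {set A}).

Lemma vstar_ub v i : v [set i] <= vstar v.
Proof. by rewrite /vstar (bigD1 i) //= le_max lexx. Qed.

Lemma vstar_ge0 v : (forall S, 0 <= v S) -> 0 <= vstar v.
Proof.
move=> v_ge0; apply: (big_ind (fun x => 0 <= x)) => // x y x_ge0 _.
by rewrite le_max x_ge0.
Qed.

Lemma vstar_attained v : vstar v = 0 \/ exists i, vstar v = v [set i].
Proof.
apply: (big_ind (fun x => x = 0 \/ exists i, x = v [set i])); first by left.
  by move=> x y hx hy; rewrite /Num.max; case: ifP.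
by move=> i _; right; exists i.
Qed.

Lemma subadditive_le_card v S :
  v set0 = 0 -> subadditive v -> v S <= #|S|%:R * vstar v.
Proof.
move=> v0 v_sub; rewrite -{1}(set_enum S) cardE.
elim: (enum S) => [|x s IH].
  have -> : [set x in [::]] = set0 :> {set A} by apply/setP => y; rewrite !inE.
  by rewrite v0 mul0r.
have -> : [set y in x :: s] = [set x] :|: [set y in s] by apply/setP => y; rewrite !inE.
apply: le_trans (v_sub _ _) _.
by rewrite /= mulrSr mulrDl mul1r addrC lerD // vstar_ub.
Qed.

Lemma exists_grid_point (a w : R) (n : nat) : 0 < a -> a <= w -> w <= n%:R * a ->
  exists k, (k < n)%N /\ (k.+1)%:R * a <= w /\ w <= 2 * (k.+1)%:R * a.
Proof.
move=> a_gt0 a_le_w; elim: n => [|[|m] IH] w_le; first by rewrite mul0r in w_le; lra.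
  by exists 0%N; split => //; rewrite mulr1 in w_le *; lra.
have [w_le'|w_gt] := lerP w ((m.+1)%:R * a).
  by have [k [k_lt Hk]] := IH w_le'; exists k; split => //; apply: ltnW.
exists m; split=> //; split; first exact: ltW.
apply: le_trans w_le _.
by rewrite ler_pM2r // -natrM ler_nat; lia.
Qed.

Section Greedy.
Variables (B : R) (c : A -> R).
Hypotheses (c_ge0 : forall i, 0 <= c i) (c_le_B : forall i, c i <= B).

Lemma greedy_prefix s acc : prefix (greedy B c s acc) s.
Proof.
elim: s acc => [|x s IH] acc //=.
by case: ifP => _ //=; rewrite eqxx IH.
Qed.

Lemma greedy_cost_le s acc : acc <= B -> acc + \sum_(i <- greedy B c s acc) c i <= B.
Proof.
elim: s acc => [|x s IH] acc acc_le /=; first by rewrite big_nil addr0.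
by case: ifP => [/IH|_]; rewrite ?big_cons ?addrA // big_nil addr0.
Qed.

(* Since items come by decreasing cost, acc bounds every remaining cost unless
   nothing positive has been taken yet; so the first rejected item, of cost at
   most min(acc, B), shows that more than half of the budget is used. *)
Lemma greedy_cost_half s acc :
  sorted (fun x y => c y <= c x) s -> 0 <= acc ->
  (acc = 0 \/ {in s, forall y, c y <= acc}) ->
  greedy B c s acc != s -> B < 2 * (acc + \sum_(i <- greedy B c s acc) c i).
Proof.
elim: s acc => [|x s IH] acc //= s_sorted acc_ge0 inv.
have ge_x : {in s, forall y, c y <= c x}.
  apply/allP; apply: order_path_min s_sorted.
  by move=> a b d h1 h2; apply: le_trans h2 h1.
case: ifP => [_|x_over _].
  rewrite eqseq_cons eqxx big_cons addrA; apply: IH; first exact: path_sorted s_sorted.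
    exact: addr_ge0.
  by right=> y /ge_x cy_le; apply: le_trans cy_le _; rewrite lerDr.
rewrite big_nil addr0; move/negbT: x_over; rewrite -ltNge.
have := c_le_B x; case: inv => [->|/(_ x (mem_head _ _))]; lra.
Qed.

End Greedy.

Lemma cost_set_uniq c (s : seq A) : uniq s -> cost c [set x in s] = \sum_(i <- s) c i.
Proof. by move=> s_uniq; rewrite /cost big_uniq //; apply: eq_bigl => y; rewrite inE. Qed.

Lemma sum_prices B c u S : \sum_(i in S) prices B c u i = u / (2 * B) * cost c S.
Proof. by rewrite /cost mulr_sumr. Qed.

Lemma demand_sub_price v dem p S :
  demand_oracle v dem -> S \subset dem p ->
  \sum_(i in S) p i <= v (dem p) - v (dem p :\: S).
Proof.
move=> oracle S_sub; have := oracle p (dem p :\: S).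
by rewrite [\sum_(i in dem p) _](big_setID S) /= (setIidPr S_sub); lra.
Qed.

Section Algorithm.
Context {c : A -> R} {B : R} {v : {set A} -> R}.
Context {dem : (A -> R) -> {set A}} {ord : R -> seq A}.
Hypotheses (B_gt0 : 0 < B) (c_ge0 : forall i, 0 <= c i) (c_le_B : forall i, c i <= B).
Hypotheses (v_ge0 : forall S, 0 <= v S) (v_sub : subadditive v).
Hypotheses (oracle : demand_oracle v dem) (ord_valid : valid_order B c dem ord).

Local Notation T u := (dem (prices B c u)).
Local Notation g u := (greedy B c (ord u) 0).

Lemma greedy_uniq u : uniq (g u).
Proof.
have [ord_perm _] := ord_valid u.
by apply: prefix_uniq (greedy_prefix _ _ _ _) _; rewrite (perm_uniq ord_perm) enum_uniq.
Qed.

Lemma greedy_subset u : [set x in g u] \subset T u.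
Proof.
have [ord_perm _] := ord_valid u.
apply/subsetP => y; rewrite inE -[y \in T u]mem_enum -(perm_mem ord_perm).
have /prefixP [r ord_eq] := greedy_prefix B c (ord u) 0.
by move=> y_in; rewrite ord_eq mem_cat y_in.
Qed.

Lemma greedy_set_cost_le u : cost c [set x in g u] <= B.
Proof.
by rewrite cost_set_uniq ?greedy_uniq // -[X in X <= _]add0r greedy_cost_le ?ltW.
Qed.

Lemma S_u_cost_le u : cost c (S_u v B c dem ord u) <= B.
Proof.
rewrite /S_u; case: ifP => _; last exact: greedy_set_cost_le.
by rewrite /cost big_set0 ltW.
Qed.

Lemma greedy_incomplete_half u : g u != ord u -> B / 2 <= cost c [set x in g u].
Proof.
have [_ ord_sorted] := ord_valid u.
move=> /(greedy_cost_half B c c_ge0 c_le_B _ _ ord_sorted (lexx 0) (or_introl erefl)).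
by rewrite add0r cost_set_uniq ?greedy_uniq //; lra.
Qed.

Lemma demanded_value_ge_half u W : 0 <= u -> cost c W <= B -> u <= v W ->
  u / 2 <= v (T u).
Proof.
move=> u_ge0 W_cost u_le_vW; set k := u / (2 * B).
have k_ge0 : 0 <= k by rewrite divr_ge0 // mulr_ge0 // ltW.
have kB : k * B = u / 2 by rewrite /k; field; rewrite gt_eqF.
have := oracle (prices B c u) W; rewrite !sum_prices -/k.
have : k * cost c W <= k * B by rewrite ler_wpM2l.
have : 0 <= k * cost c (T u) by rewrite mulr_ge0 // /cost sumr_ge0.
lra.
Qed.

Lemma S_u_value_ge u W : 0 <= u -> cost c W <= B -> u <= v W ->
  u / 4 <= v (S_u v B c dem ord u).
Proof.
move=> u_ge0 W_cost u_le_vW.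
have vT_ge := demanded_value_ge_half _ _ u_ge0 W_cost u_le_vW.
rewrite /S_u ifF; last by apply/negbTE; rewrite -leNgt.
have [ord_perm _] := ord_valid u.
have [/eqP g_all|g_part] := boolP (g u == ord u).
  have -> : [set x in g u] = T u by apply/setP => y; rewrite inE g_all (perm_mem ord_perm) mem_enum.
  lra.
set S := [set x in g u]; set k := u / (2 * B).
have S_sub : S \subset T u := greedy_subset u.
have := demand_sub_price _ _ _ _ oracle S_sub; rewrite sum_prices -/k.
have T_eq : S :|: T u :\: S = T u by rewrite -{1}(setIidPr S_sub : T u :&: S = S) setID.
have := v_sub S (T u :\: S); rewrite T_eq.
have : k * (B / 2) <= k * cost c S.
  by rewrite ler_wpM2l ?greedy_incomplete_half // divr_ge0 // mulr_ge0 // ltW.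
have : k * (B / 2) = u / 4 by rewrite /k; field; rewrite gt_eqF.
lra.
Qed.

Lemma feasible_le_8_grid_max W M : v set0 = 0 -> 0 <= M ->
  (forall u, in_Vgrid v u -> v (S_u v B c dem ord u) <= M) ->
  cost c W <= B -> vstar v <= v W -> v W <= 8 * M.
Proof.
move=> v0 M_ge0 M_ub W_cost vstar_le.
have vW_le : v W <= #|A|%:R * vstar v.
  apply: le_trans (subadditive_le_card v W v0 v_sub) _.
  by rewrite ler_wpM2r ?vstar_ge0 // ler_nat max_card.
have [vstar0|vstar_neq0] := eqVneq (vstar v) 0.
  by move: vW_le; rewrite vstar0 mulr0; lra.
have vstar_gt0 : 0 < vstar v by rewrite lt0r vstar_neq0 vstar_ge0.
have [k [k_lt [u_le u_ge]]] := exists_grid_point _ _ _ vstar_gt0 vstar_le vW_le.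
set u := (k.+1)%:R * vstar v in u_le u_ge.
have u_grid : in_Vgrid v u by exists k.
have := S_u_value_ge _ _ (mulr_ge0 (ler0n _ _) (ltW vstar_gt0)) W_cost u_le.
by have := M_ub _ u_grid; lra.
Qed.

End Algorithm.

End Development.

Theorem lemma3p5 (R : realFieldType) (A : finType) (c : A -> R) (B : R)
    (v : {set A} -> R) (dem : (A -> R) -> {set A}) (ord : R -> seq A) (u0 : R) :
  0 < B ->
  (forall i, 0 <= c i) ->
  (forall i, c i <= B) ->
  (forall S, 0 <= v S) ->
  v set0 = 0 ->
  monotone_fun v ->
  subadditive v ->
  demand_oracle v dem ->
  valid_order B c dem ord ->
  (* the output: S_{u0} with u0 in V maximizing v(S_u) over u in V *)
  in_Vgrid v u0 ->
  (forall u, in_Vgrid v u -> v (S_u v B c dem ord u) <= v (S_u v B c dem ord u0)) ->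
  cost c (S_u v B c dem ord u0) <= B /\
  (forall S' : {set A}, cost c S' <= B -> v S' <= 8 * v (S_u v B c dem ord u0)).
Proof.
move=> B_gt0 c_ge0 c_le_B v_ge0 v0 _ v_sub oracle ord_valid _ u0_max.
split=> [|S' S'_cost]; first exact: S_u_cost_le.
have approx := feasible_le_8_grid_max B_gt0 c_ge0 c_le_B v_ge0 v_sub oracle
  ord_valid _ _ v0 (v_ge0 _) u0_max.
have [|vS'_lt] := lerP (vstar v) (v S'); first exact: approx.
have [vstar0|[i vstar_i]] := vstar_attained v.
  by have := v_ge0 S'; lra.
have i_cost : cost c [set i] <= B by rewrite /cost big_set1.
by have := approx _ i_cost; rewrite -vstar_i lexx; lra.
Qed.
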